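(* For every $s\in\Sigma^n$, the arc $(s,R(s))$ is a valid arc of $B_n$ with respect to the depth assignment $d$.
   Context: Let $k\ge 2$, $\Sigma=\{0,\dots,k-1\}$ with arithmetic modulo $k$, $n\ge 1$, and $s=s[0]\cdots s[n-1]\in\Sigma^n$. The de Bruijn graph $B_n$ has node set $\Sigma^n$ and an arc $(s,t)$ iff $s[1]\cdots s[n-1]=t[0]\cdots t[n-2]$. For an integer $j$, $ICR_j(s)=s[1]\cdots s[n-1](s[0]+j)$. Let $\mathbf N$ be the set of cycles (orbits) of the permutation $ICR_1$ of $\Sigma^n$. Let $\mathbf G$ be the directed graph on $\mathbf N$ with an arc $(\mathcal U,\mathcal V)$ iff some $s\in\mathcal U$ has $ICR_0(s)\in\mathcal V$. Let $\mathbf T$ be a directed spanning tree of $\mathbf G$ rooted at $\mathcal R\in\mathbf N$ (arcs from parent to child), with parent map $parent$; the depth of a cycle is its distance from the root (root has depth $0$). For each $\mathcal U\ne\mathcal R$, a representative $rep(\mathcal U)$ is a fixed node $s\in\mathcal U$ with $ICR_0^{-1}(s)\in parent(\mathcal U)$ and $s[n-1]\equiv \text{depth}(\mathcal U)\pmod k$ (assumed to exist and fixed). $\mathrm{Reps}$ is the set of all representatives. Define $R(s)=ICR_0(s)$ if $ICR_0(s)\in\mathrm{Reps}$; $R(s)=ICR_2(s)$ if $ICR_1(s)\in\mathrm{Reps}$; $R(s)=ICR_1(s)$ otherwise. The depth assignment $d:\Sigma^n\to\Sigma$ is $d_s=p+1 \pmod k$, where $p$ is the depth in $\mathbf T$ of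 the cycle containing $s$. An arc $(s,t)$ of $B_n$ is valid if, with $b=s[0]$ and $c=t[n-1]$, either ($b+1=c$ and $d_s=d_t$) or ($b+1=d_t$ and $c=d_s$). *)

From mathcomp Require Import all_boot all_algebra.
Set Implicit Arguments. Unset Strict Implicit. Unset Printing Implicit Defensive.
Import GRing.Theory.
Local Open Scope ring_scope.

(* Alphabet Sigma = 'Z_k (integers mod k; faithful when 1 < k).
   Words of Sigma^n are n-tuples; s[i] is [ch s i]. *)
Definition word (k n : nat) : finType := (n.-tuple 'Z_k)%type.

Definition ch (k n : nat) (s : word k n) (i : nat) : 'Z_k := nth 0 (tval s) i.

Definition icr_seq (k j : nat) (s : seq 'Z_k) : seq 'Z_k :=
  if s is x :: t then rcons t (x + j%:R) else [::].

Lemma icr_seq_size (k n j : nat) (s : word k n) : size (icr_seq j (tval s)) == n.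
Proof.
case: s => [[|x t]] //= Hs; by rewrite size_rcons.
Qed.

Definition ICR (k n j : nat) (s : word k n) : word k n := Tuple (icr_seq_size j s).

Definition cyc (k n : nat) (s : word k n) : {set word k n} :=
  [set t | fconnect (@ICR k n 1) s t].
Definition cycles (k n : nat) : {set {set word k n}} := [set cyc s | s : word k n].

Definition Garc (k n : nat) (U V : {set word k n}) : bool :=
  [exists s in U, ICR 0 s \in V].

Definition Reps (k n : nat) (Rt : {set word k n}) (rep : {set word k n} -> word k n)
  : {set word k n} :=
  [set rep U | U in [set U in cycles k n | U != Rt]].

Definition Rsucc (k n : nat) (Rt : {set word k n}) (rep : {set word k n} -> word k n)
  (s : word k n) : word k n :=
  if ICR 0 s \in Reps Rt rep then ICR 0 s
  else if ICR 1 s \in Reps Rt rep then ICR 2 s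
  else ICR 1 s.

Definition dep (k n : nat) (depth : {set word k n} -> nat) (s : word k n) : 'Z_k :=
  (depth (cyc s)).+1%:R.

Definition Barc (k n : nat) (s t : word k n) : bool :=
  drop 1 (tval s) == take n.-1 (tval t).

Definition valid_arc (k n : nat) (depth : {set word k n} -> nat) (s t : word k n) : bool :=
  Barc s t &&
  (let b := ch s 0 in let c := ch t n.-1 in
   ((b + 1 == c) && (dep depth s == dep depth t)) ||
   ((b + 1 == dep depth t) && (c == dep depth s))).

(* Each of the three possible successors is ICR_j s for some j, hence a de Bruijn
   arc whose last symbol is s[0] + j, so validity only concerns depths.  For
   j = 1 the depth is unchanged, since s and ICR_1 s lie on the same cycle.  The
   other two cases happen next to a representative t = rep U: its
   ICR_0-predecessor lies in parent U, so its depth label is depth U = t[n-1],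
   one less than that of t.  For j = 0 that predecessor is s itself; for j = 2 it
   is the word u with ICR_0 u = ICR_1 s, and then ICR_2 s = ICR_1 u lies on the
   cycle of u. *)
From mathcomp Require Import all_boot all_algebra.
Import GRing.Theory.
Local Open Scope ring_scope.

Set Implicit Arguments.
Unset Strict Implicit.

Section ShiftRegister.

Variables k n : nat.
Implicit Types (s t u : word k n) (U : {set word k n}).

Lemma ICR_inj j : injective (@ICR k n j).
Proof.
move=> [[|x a] Ha] [[|y b] Hb] /(congr1 val); rewrite /ICR /icr_seq /=;
  try by move=> /(congr1 size); rewrite ?size_rcons.
  by move=> _; apply: val_inj.
move/rcons_inj=> E; apply: val_inj => /=.
have ab : a = b := congr1 fst E.
have xy : x + j%:R = y + j%:R := congr1 snd E.
by rewrite ab (addIr _ xy).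
Qed.

Lemma ICR_addn i j m s t : ICR i t = ICR j s -> ICR (i + m) t = ICR (j + m) s.
Proof.
case: s => [[|x a] Ha]; case: t => [[|y b] Hb] /(congr1 val) /= E; apply: val_inj => //=;
  try by move/(congr1 size): E; rewrite /icr_seq ?size_rcons.
move/rcons_inj: E => E.
have ba : b = a := congr1 fst E.
have yx : y + i%:R = x + j%:R := congr1 snd E.
by rewrite /icr_seq ba !natrD !addrA yx.
Qed.

Lemma Barc_ICR j s : Barc s (ICR j s).
Proof.
case: s => [[|x a] Ha]; rewrite /Barc //=.
have -> : n.-1 = size a by rewrite -(eqP Ha).
by rewrite -cats1 take_size_cat // drop0.
Qed.

Lemma ch_ICR_last j s : (0 < n)%N -> ch (ICR j s) n.-1 = ch s 0 + j%:R.
Proof.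
case: s => [[|x a] Ha] n_gt0; first by rewrite -(eqP Ha) in n_gt0.
have -> : n.-1 = size a by rewrite -(eqP Ha).
by rewrite /ch /= nth_rcons ltnn eqxx.
Qed.

Lemma valid_arc_ICR (depth : {set word k n} -> nat) j s : (0 < n)%N ->
  valid_arc depth s (ICR j s) =
  ((1 == j%:R :> 'Z_k) && (dep depth s == dep depth (ICR j s))) ||
  ((ch s 0 + 1 == dep depth (ICR j s)) && (ch s 0 + j%:R == dep depth s)).
Proof. by move=> n_gt0; rewrite /valid_arc Barc_ICR ch_ICR_last // (inj_eq (addrI _)). Qed.

Lemma cyc_eq s t : t \in cyc s -> cyc t = cyc s.
Proof.
rewrite inE => st; apply/setP => u; rewrite !inE.
have sym : connect_sym (frel (@ICR k n 1)) by apply: fconnect_sym; exact: ICR_inj.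
by rewrite (same_connect sym st).
Qed.

Lemma cycles_cyc U t : U \in cycles k n -> t \in U -> cyc t = U.
Proof. by case/imsetP => s _ -> /cyc_eq. Qed.

Lemma cyc_ICR1 s : cyc (ICR 1 s) = cyc s.
Proof. by apply: cyc_eq; rewrite inE fconnect1. Qed.

Lemma dep_ICR1 (depth : {set word k n} -> nat) s :
  dep depth (ICR 1 s) = dep depth s.
Proof. by rewrite /dep cyc_ICR1. Qed.

End ShiftRegister.

Section SpanningTree.

Variables (k n : nat) (Rt : {set word k n}).
Variables (parent : {set word k n} -> {set word k n}) (depth : {set word k n} -> nat).
Variable rep : {set word k n} -> word k n.
Hypothesis n_gt0 : (0 < n)%N.
Hypothesis parent_cycles : forall U, U \in cycles k n -> U != Rt ->
  parent U \in cycles k n.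
Hypothesis depthS : forall U, U \in cycles k n -> U != Rt ->
  depth U = (depth (parent U)).+1.
Hypothesis repP : forall U, U \in cycles k n -> U != Rt ->
  [/\ rep U \in U, exists2 t, t \in parent U & ICR 0 t = rep U
    & ch (rep U) n.-1 = (depth U)%:R].

Notation d := (dep depth).
Implicit Types (s t u : word k n).

Lemma Reps_pred t : t \in Reps Rt rep ->
  (exists2 u, ICR 0 u = t & d u = ch t n.-1) /\ d t = ch t n.-1 + 1.
Proof.
case/imsetP=> U; rewrite inE => /andP[U_cyc U_nRt] ->.
have [repU [u u_par uE] ch_rep] := repP U_cyc U_nRt.
rewrite /dep (cycles_cyc U_cyc repU) ch_rep -natr1; split => //.
exists u => //.
by rewrite (cycles_cyc (parent_cycles U_cyc U_nRt) u_par) -depthS.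
Qed.

Lemma valid_arc_to_Reps s : ICR 0 s \in Reps Rt rep -> valid_arc depth s (ICR 0 s).
Proof.
case/Reps_pred=> [[u /ICR_inj -> du] dt].
by rewrite valid_arc_ICR // dt du ch_ICR_last // addr0 !eqxx orbT.
Qed.

Lemma valid_arc_past_Reps s : ICR 1 s \in Reps Rt rep -> valid_arc depth s (ICR 2 s).
Proof.
case/Reps_pred=> [[u uE du] dt].
have u_shift : ICR 1 u = ICR 2 s := ICR_addn 1 uE.
rewrite valid_arc_ICR // -u_shift dep_ICR1 -(dep_ICR1 depth s) dt du.
by rewrite ch_ICR_last // -addrA -natr1 !eqxx orbT.
Qed.

Lemma valid_arc_ICR1 s : valid_arc depth s (ICR 1 s).
Proof. by rewrite valid_arc_ICR // dep_ICR1 !eqxx. Qed.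

End SpanningTree.

Theorem lemma12 (k n : nat) (hk : (1 < k)%N) (hn : (0 < n)%N)
  (Rt : {set word k n})
  (parent : {set word k n} -> {set word k n})
  (depth : {set word k n} -> nat)
  (rep : {set word k n} -> word k n)
  (HRt : Rt \in cycles k n)
  (Hpar : forall U, U \in cycles k n -> U != Rt ->
            parent U \in cycles k n /\ Garc (parent U) U)
  (Hreach : forall U, U \in cycles k n -> exists m, iter m parent U = Rt)
  (Hdepth0 : depth Rt = 0%N)
  (HdepthS : forall U, U \in cycles k n -> U != Rt ->
               depth U = (depth (parent U)).+1)
  (Hrep : forall U, U \in cycles k n -> U != Rt ->
            [/\ rep U \in U,
                exists2 t, t \in parent U & ICR 0 t = rep U
              & ch (rep U) n.-1 = (depth U)%:R]) :
  forall s : word k n, valid_arc depth s (Rsucc Rt rep s).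
Proof.
have parent_cycles U U_cyc U_nRt := (Hpar U U_cyc U_nRt).1.
move=> s; rewrite /Rsucc.
case: ifP => [/(valid_arc_to_Reps hn parent_cycles HdepthS Hrep) //|_].
case: ifP => [/(valid_arc_past_Reps hn parent_cycles HdepthS Hrep) //|_].
exact: valid_arc_ICR1.
Qed.
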